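(* Let $G$ be a finite group. If $\mathcal{C}$ is a cycle of $\mathcal{P}(G)$ with maximum length, then $\ell(\mathcal{C})\geq w_G+1$. Moreover, if equality holds, then for every path $\mathcal{W}=c_1,\dots,c_k$ in $\mathcal{P}^*(G)/\mathtt{N}$ of maximum $\mathtt{N}$-weight, and for every $i\in\{2,\dots,k-1\}$ with $|c_i|\geq2$, there is no vertex $y$ of $\mathcal{P}^*(G)/\mathtt{N}$ with $y\notin\{c_1,\dots,c_k\}$, $y$ equal or adjacent to $c_i$, and $|y|\geq2$.
   Context: The power graph $\mathcal{P}(G)$ has vertex set $G$, and distinct $x,y$ are adjacent iff one is a positive integer power of the other; $\mathcal{P}^*(G)$ is its subgraph induced on $G\setminus\{1\}$. $N[x]$ is the closed neighbourhood of $x$ in $\mathcal{P}(G)$, and $x\mathtt{N}y$ iff $N[x]=N[y]$. $\mathcal{P}^*(G)/\mathtt{N}$ is the quotient graph whose vertices are the $\mathtt{N}$-classes of elements of $G\setminus\{1\}$, two distinct classes being adjacent iff some element of one is adjacent in $\mathcal{P}^*(G)$ to some element of the other. A path is a sequence of distinct vertices with consecutive ones adjacent; a cycle is a cyclic such sequence of $k\ge3$ distinct vertices, with length $\ell$ its number of edges. The $\mathtt{N}$-weight of a path $\mathcal{W}$ in $\mathcal{P}^*(G)/\mathtt{N}$ is $w_{\mathtt{N}}(\mathcal{W})=\sum_{c\in V_{\mathcal{W}}}|c|$, and $w_G$ is the maximum $\mathtt{N}$-weight of a path in $\mathcal{P}^*(G)/\mathtt{N}$. *)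

From mathcomp Require Import all_boot all_fingroup.
From mathcomp Require Import boolp.
Set Implicit Arguments. Unset Strict Implicit. Unset Printing Implicit Defensive.
Local Open Scope group_scope.

Section PowerGraph.
Variable gT : finGroupType.

Definition is_pow (x y : gT) : Prop := exists n : nat, (0 < n)%N /\ y = x ^+ n.

(* adjacency in the power graph P(G), G = the whole group gT *)
Definition padj (x y : gT) : bool := (x != y) && `[< is_pow x y \/ is_pow y x >].

Definition cnbhd (x : gT) : {set gT} := [set y | (y == x) || padj x y].

Definition Nclass (x : gT) : {set gT} := [set y | (y != 1) && (cnbhd y == cnbhd x)].

Definition qvert (c : {set gT}) : bool := [exists x, (x != 1) && (c == Nclass x)].

Definition qadj (c d : {set gT}) : bool :=
  (c != d) && [exists x in c, exists y in d, padj x y].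

Definition qpath (s : seq {set gT}) : bool :=
  [&& (0 < size s)%N, all qvert s, uniq s & sorted qadj s].

Definition Nweight (s : seq {set gT}) : nat := \sum_(c <- s) #|c|.

(* w_G : maximum N-weight of a path (paths have at most #|{set gT}| vertices) *)
Definition wG : nat :=
  \max_(n < #|{set gT}|.+1) \max_(t : n.-tuple {set gT} | qpath t) Nweight t.

(* a cycle of P(G): k >= 3 distinct vertices, cyclically consecutive adjacent;
   its length (number of edges) is size s *)
Definition pcycle (s : seq gT) : bool := [&& (2 < size s)%N, uniq s & path.cycle padj s].

Definition max_pcycle (s : seq gT) : Prop :=
  pcycle s /\ forall s' : seq gT, pcycle s' -> (size s' <= size s)%N.

End PowerGraph.

From mathcomp Require Import all_boot all_fingroup.
From mathcomp Require Import boolp zify.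
Set Implicit Arguments. Unset Strict Implicit. Unset Printing Implicit Defensive.

(** Listing the identity followed by the elements of the classes c_1, ..., c_k
    of a path of P*(G)/N, class after class, gives a cycle of P(G) of length
    w_N(c_1, ..., c_k) + 1: every N-class is a clique, the elements of two
    adjacent classes are pairwise adjacent, and the identity is adjacent to
    every other element.  If the bound is attained and a class y outside the
    path is adjacent to a class c_i containing two elements, pick a in c_i;
    the detour c_1, ..., c_(i-1), {a}, y, c_i \ {a}, c_(i+1), ..., c_k gives
    a cycle longer by |y|, contradicting maximality. *)

Section SortedSeq.
Variables (T : eqType) (r : rel T).

Lemma sorted_flatten (ss : seq (seq T)) :
  all (fun s => s != [::]) ss -> all (sorted r) ss -> sorted (allrel r) ss ->
  sorted r (flatten ss).
Proof.
elim: ss => [|s ss IH] //= /andP [s0 ss0] /andP [rs rss] r_ss.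
have {IH} r_flat := IH ss0 rss (path_sorted r_ss).
case: s s0 rs r_ss => [|x s] //= _ rs r_ss.
rewrite cat_path rs /=; case: ss {rss} ss0 r_ss r_flat => [|[|y t] ss] //= _.
case/andP=> /allrelP r_st _ ->; rewrite andbT.
by apply: r_st; rewrite ?mem_last ?mem_head.
Qed.

Lemma sorted_detour s1 s2 x y : r x y -> r y x ->
  sorted r (s1 ++ x :: s2) -> sorted r (s1 ++ [:: x, y, x & s2]).
Proof. by move=> rxy ryx; rewrite !sorted_cat_cons /= rxy ryx. Qed.

Lemma sorted_cat_cons_weaken s1 s2 x x' :
  (forall z, r z x -> r z x') -> (forall z, r x z -> r x' z) ->
  sorted r (s1 ++ x :: s2) -> sorted r (s1 ++ x' :: s2).
Proof.
move=> rx rx'; rewrite !sorted_cat_cons => /andP [r1 r2]; apply/andP; split.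
  by case: s1 r1 => [|z s1] //=; rewrite !rcons_path => /andP [-> /rx].
by case: s2 r2 => [|z s2] //= /andP [/rx' -> ->].
Qed.

End SortedSeq.

Section SetBlocks.
Variables (T : finType) (r : rel T).
Implicit Types (A B c y : {set T}) (S : seq {set T}).

Definition clique A := {in A &, forall x z, x != z -> r x z}.

Definition joined A B := allrel r (enum A) (enum B).

Definition flat_enum S : seq T := flatten [seq enum A | A <- S].

Definition detour S1 S2 a c y := S1 ++ [:: [set a], y, c :\ a & S2].

Lemma joinedP A B : reflect {in A & B, forall x z, r x z} (joined A B).
Proof.
apply: (iffP allrelP) => rAB x z xA zB; apply: rAB; by rewrite ?mem_enum in xA zB *.
Qed.

Lemma joinedS A B A' B' :
  A' \subset A -> B' \subset B -> joined A B -> joined A' B'.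
Proof.
move=> /subsetP sA /subsetP sB /joinedP rAB; apply/joinedP => x z /sA xA /sB.
exact: rAB.
Qed.

Lemma sorted_joined_subset S1 S2 A B : B \subset A ->
  sorted joined (S1 ++ A :: S2) -> sorted joined (S1 ++ B :: S2).
Proof. by move=> sBA; apply: sorted_cat_cons_weaken => C; apply: joinedS. Qed.

Lemma cliqueS A B : A \subset B -> clique B -> clique A.
Proof. by move=> /subsetP sAB rB x z /sAB xB /sAB; apply: rB. Qed.

Lemma sorted_enum_clique A : clique A -> sorted r (enum A).
Proof.
move=> rA; apply: pairwise_sorted.
have : pairwise [rel x z | x != z] (enum A) by rewrite -uniq_pairwise enum_uniq.
apply: (sub_in_pairwise (P := mem A)); first exact: rA.
by apply/allP => x; rewrite mem_enum.
Qed.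

Lemma sorted_flat_enum S :
  {in S, forall A, A != set0 /\ clique A} -> sorted joined S -> sorted r (flat_enum S).
Proof.
move=> blocks jS; apply: sorted_flatten; rewrite ?all_map ?sorted_map //.
  apply/allP => A /blocks [/set0Pn [x xA] _] /=.
  by apply/eqP => eA; rewrite -mem_enum eA in xA.
by apply/allP => A /blocks [_ /sorted_enum_clique].
Qed.

Lemma size_flat_enum S : size (flat_enum S) = \sum_(A <- S) #|A|.
Proof.
elim: S => [|A S IH]; first by rewrite big_nil.
by rewrite big_cons -IH cardE -size_cat.
Qed.

Lemma mem_flat_enum S x : (x \in flat_enum S) = has (fun A => x \in A) S.
Proof.
apply/flatten_mapP/hasP => [[A AS]|[A AS xA]]; first by rewrite mem_enum; exists A.
by exists A; rewrite ?mem_enum.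
Qed.

Lemma uniq_flat_enum S :
  uniq S -> {in S &, forall A B, A != B -> [disjoint A & B]} ->
  uniq (flat_enum S).
Proof.
elim: S => [|A S IH] // /andP [AS uS] dS.
change (uniq (enum A ++ flat_enum S)); rewrite cat_uniq enum_uniq IH //; last first.
  by move=> B C BS CS; apply: dS; rewrite inE ?BS ?CS orbT.
rewrite andbT /=; apply/hasPn => x; rewrite mem_flat_enum mem_enum => /hasP [B BS xB].
have AB : A != B by apply: contraNneq AS => ->.
by rewrite (disjointFl (dS _ _ (mem_head _ _) _ AB) xB) // inE BS orbT.
Qed.

Lemma perm_enum_setD1 A a : a \in A -> perm_eq (enum A) (a :: enum (A :\ a)).
Proof.
move=> aA; apply: uniq_perm; rewrite ?enum_uniq //=.
  by rewrite mem_enum setD11 enum_uniq.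
by move=> x; rewrite inE !mem_enum in_setD1; case: eqP => [->|].
Qed.

Lemma perm_flat_enum_detour S1 S2 a c y : a \in c ->
  perm_eq (flat_enum (detour S1 S2 a c y)) (flat_enum (y :: S1 ++ c :: S2)).
Proof.
move=> ac; apply/seq.permP => p.
rewrite /flat_enum /detour /= !map_cat !flatten_cat /= !count_cat.
rewrite (seq.permP (perm_enum_setD1 ac)) enum_set1 /= addn0.
by rewrite [p a + (_ + _)]addnCA addnCA -[p a + _ + _]addnA.
Qed.

Lemma sorted_flat_enum_detour S1 S2 a c y :
  a \in c -> 1 < #|c| -> {in y :: S1 ++ c :: S2, forall A, A != set0 /\ clique A} ->
  joined c y -> joined y c -> sorted joined (S1 ++ c :: S2) ->
  sorted r (flat_enum (detour S1 S2 a c y)).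
Proof.
move=> ac c_gt1 blocks jcy jyc sS.
have [_ cc] : c != set0 /\ clique c.
  by apply: blocks; rewrite !(in_cons, mem_cat) eqxx !orbT.
have ac1 : [set a] \subset c by rewrite sub1set.
apply: sorted_flat_enum => [A|].
  rewrite mem_cat !inE => /orP [AS1 | /or4P [/eqP -> | /eqP -> | /eqP -> | AS2]].
  - by apply: blocks; rewrite in_cons mem_cat AS1 orbT.
  - by split; [apply/set0Pn; exists a; rewrite inE | apply: cliqueS ac1 cc].
  - by apply: blocks; rewrite mem_head.
  - split; last exact: cliqueS (subD1set c a) cc.
    by rewrite -card_gt0; rewrite (cardsD1 a c) ac add1n ltnS in c_gt1.
  - by apply: blocks; rewrite in_cons mem_cat in_cons AS2 !orbT.
(* Shrink the two copies of c in S1 ++ [:: c, y, c & S2] to {a} and c :\ a. *)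
move/(sorted_detour jcy jyc)/(sorted_joined_subset ac1): sS.
have splitS d : S1 ++ [:: [set a], y, d & S2] = (S1 ++ [:: [set a]; y]) ++ d :: S2.
  by rewrite -catA.
by rewrite /detour !splitS; apply: sorted_joined_subset (subD1set c a).
Qed.

End SetBlocks.

Section PowerGraph.
Variable gT : finGroupType.
Local Open Scope group_scope.
Implicit Types (x u v : gT) (s C : seq gT) (c d y : {set gT}) (S W : seq {set gT}).

Lemma padjC : symmetric (@padj gT).
Proof.
by move=> x u; rewrite /padj eq_sym; congr (_ && _); apply/asboolP/asboolP; tauto.
Qed.

Lemma padj1 x : x != 1 -> padj 1 x.
Proof.
move=> x1; rewrite /padj eq_sym x1; apply/asboolP; right.
by exists #[x]; rewrite order_gt0 expg_order.
Qed.

Lemma pcycle_cons1 s :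
  1 < size s -> uniq s -> 1 \notin s -> sorted (@padj gT) s -> pcycle (1 :: s).
Proof.
case: s => [|x s] // s_gt1 us s1 /= ps.
have neq1 z : z \in x :: s -> z != 1 by move=> zs; apply: contraNneq s1 => <-.
rewrite /pcycle cons_uniq s1 us /= rcons_path ps padj1 ?neq1 ?mem_head //=.
by rewrite padjC padj1 ?neq1 ?mem_last ?andbT.
Qed.

Lemma qvert_Nclass c u : qvert c -> u \in c -> u != 1 /\ c = Nclass u.
Proof.
case/existsP => x /andP [_ /eqP ->]; rewrite inE => /andP [u1 /eqP Nux].
by split=> //; apply/setP => z; rewrite !inE Nux.
Qed.

Lemma qvert_eq c d u : qvert c -> qvert d -> u \in c -> u \in d -> c = d.
Proof. by move=> qc qd /(qvert_Nclass qc) [_ ->] /(qvert_Nclass qd) [_ ->]. Qed.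

Lemma qvert_neq0 c : qvert c -> c != set0.
Proof.
by case/existsP => x /andP [x1 /eqP ->]; apply/set0Pn; exists x; rewrite inE x1 eqxx.
Qed.

Lemma qvert_no1 c : qvert c -> 1 \notin c.
Proof. by move=> qc; apply/negP => /(qvert_Nclass qc) []; rewrite eqxx. Qed.

Lemma qvert_cnbhd c u v : qvert c -> u \in c -> v \in c -> cnbhd u = cnbhd v.
Proof.
move=> qc /(qvert_Nclass qc) [_ ->]; rewrite inE.
by case/andP=> _ /eqP ->.
Qed.

Lemma qvert_padj c x u v : qvert c -> x \in c -> u \in c -> v \notin c ->
  padj x v -> padj u v.
Proof.
move=> qc xc uc vc pxv.
have : v \in cnbhd u by rewrite (qvert_cnbhd qc uc xc) inE pxv orbT.
by rewrite inE => /orP [/eqP vu|//]; rewrite vu uc in vc.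
Qed.

Lemma qvert_clique c : qvert c -> clique (@padj gT) c.
Proof.
move=> qc u v uc vc vu.
have : v \in cnbhd u by rewrite (qvert_cnbhd qc uc vc) inE eqxx.
by rewrite inE eq_sym (negbTE vu).
Qed.

Lemma qvert_block c : qvert c -> c != set0 /\ clique (@padj gT) c.
Proof. by move=> qc; split; [apply: qvert_neq0 | apply: qvert_clique]. Qed.

Lemma qadjC : symmetric (@qadj gT).
Proof.
move=> c d; rewrite /qadj eq_sym; congr (_ && _).
by apply/existsP/existsP => -[x /andP [xA /existsP [y /andP [yB pxy]]]];
  exists y; rewrite yB /=; apply/existsP; exists x; rewrite xA padjC.
Qed.

Lemma qvert_notin c d u : qvert c -> qvert d -> c != d -> u \in c -> u \notin d.
Proof. by move=> qc qd cd uc; apply: contra cd => ud; rewrite (qvert_eq qc qd uc ud). Qed.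

Lemma qadj_joined c d : qvert c -> qvert d -> qadj c d -> joined (@padj gT) c d.
Proof.
move=> qc qd /andP [cd /existsP [x /andP [xc /existsP [y /andP [yd pxy]]]]].
have dc : d != c by rewrite eq_sym.
apply/joinedP => u v uc vd.
have puy : padj u y := qvert_padj qc xc uc (qvert_notin qd qc dc yd) pxy.
by rewrite padjC (qvert_padj qd yd vd (qvert_notin qc qd cd uc)) // padjC.
Qed.

Lemma sorted_qadj_joined S :
  all (@qvert gT) S -> sorted (@qadj gT) S -> sorted (joined (@padj gT)) S.
Proof. by apply: sub_in_sorted => c d; apply: qadj_joined. Qed.

Lemma uniq_flat_enum_qvert S : all (@qvert gT) S -> uniq S -> uniq (flat_enum S).
Proof.
move=> /allP qS uS; apply: uniq_flat_enum => // c d /qS qc /qS qd cd.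
by rewrite disjoint_subset; apply/subsetP => u uc; rewrite inE (qvert_notin qc qd).
Qed.

Lemma one_notin_flat_enum S : all (@qvert gT) S -> 1 \notin flat_enum S.
Proof.
by move=> /allP qS; rewrite mem_flat_enum; apply/hasPn => c /qS /qvert_no1.
Qed.

Lemma pcycle_qpath W : qpath W -> 1 < Nweight W -> pcycle (1 :: flat_enum W).
Proof.
case/and4P => _ qW uW sW wW; apply: pcycle_cons1.
- by rewrite size_flat_enum.
- exact: uniq_flat_enum_qvert.
- exact: one_notin_flat_enum.
by apply: sorted_flat_enum (sorted_qadj_joined qW sW) => c /(allP qW) /qvert_block.
Qed.

Lemma Nweight_lt_max_pcycle C W : max_pcycle C -> qpath W -> Nweight W < size C.
Proof.
case=> /and3P [C3 _ _] Cmax qW; case: (leqP (Nweight W) 1) => [|wW]; first by lia.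
by have := Cmax _ (pcycle_qpath qW wW); rewrite /= size_flat_enum.
Qed.

Lemma wG_lt_max_pcycle C : max_pcycle C -> wG gT < size C.
Proof.
move=> mC; have [/and3P [C3 _ _] _] := mC.
suff : wG gT <= (size C).-1 by lia.
apply/bigmax_leqP => n _; apply/bigmax_leqP => t qt.
by have := Nweight_lt_max_pcycle mC qt; lia.
Qed.

Lemma pcycle_qpath_detour W c y :
  qpath W -> c \in W -> 1 < #|c| -> qvert y -> y \notin W -> qadj y c ->
  exists2 s : seq gT, pcycle s & size s = (#|y| + Nweight W).+1.
Proof.
case/and4P => _ qW uW sW cW c_gt1 qy yW yc.
have [a [_ [ac _ _]]] := card_gt1P c_gt1.
have qc := allP qW c cW; have cy : qadj c y by rewrite qadjC.
case/splitPr: cW qW uW sW yW => W1 W2 qW uW sW yW.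
have qyW : all (@qvert gT) (y :: W1 ++ c :: W2) by rewrite /= qy.
have permD := perm_flat_enum_detour W1 W2 y ac.
have sizeD : size (flat_enum (detour W1 W2 a c y)) = #|y| + Nweight (W1 ++ c :: W2).
  by rewrite (perm_size permD) size_flat_enum big_cons.
exists (1 :: flat_enum (detour W1 W2 a c y)); last by rewrite /= sizeD.
apply: pcycle_cons1.
- rewrite sizeD /Nweight big_cat big_cons /= !addnA -addnA.
  exact: leq_trans c_gt1 (leq_trans (leq_addr _ _) (leq_addl _ _)).
- by rewrite (perm_uniq permD) uniq_flat_enum_qvert //= yW.
- by rewrite (perm_mem permD) one_notin_flat_enum.
apply: sorted_flat_enum_detour ac c_gt1 _ (qadj_joined qc qy cy)
  (qadj_joined qy qc yc) (sorted_qadj_joined qW sW).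
by move=> A /(allP qyW) /qvert_block.
Qed.

End PowerGraph.

Theorem mainTheorem5 (gT : finGroupType) (C : seq gT) :
  max_pcycle C ->
  (wG gT).+1 <= size C /\
  (size C = (wG gT).+1 ->
   forall W : seq {set gT}, qpath W -> Nweight W = wG gT ->
   forall i : nat, 0 < i < (size W).-1 -> 2 <= #|nth set0 W i| ->
   ~ (exists y : {set gT},
        [/\ qvert y, y \notin W,
            y = nth set0 W i \/ qadj y (nth set0 W i) & 2 <= #|y|])).
Proof.
move=> mC; split; first exact: wG_lt_max_pcycle.
move=> sC W qW wW i /andP [_ iW] c_gt1 [y [qy yW yc _]].
have ciW : nth set0 W i \in W by rewrite mem_nth // (leq_trans iW (leq_pred _)).
case: yc => [yc|yc]; first by rewrite yc ciW in yW.
have [s ps size_s] := pcycle_qpath_detour qW ciW c_gt1 qy yW yc.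
have := mC.2 _ ps; rewrite size_s sC wW; have := qvert_neq0 qy.
by rewrite -card_gt0; lia.
Qed.
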